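(* Let $(E\to M,\rho,\langle\cdot,\cdot\rangle,\circ)$ be a Courant algebroid and $(\mathbf I,\mathbf J,\mathbf K)$ an almost hypercomplex structure on $E$. There exists at most one hypercomplex connection $\nabla$ satisfying $\nabla\mathbf I=\nabla\mathbf J=\nabla\mathbf K=0$ and, for all $X,Y\in\Gamma(E)$, $$T(X,Y)=\mathbf ID\langle X,\mathbf IY\rangle+\mathbf JD\langle X,\mathbf JY\rangle+\mathbf KD\langle X,\mathbf KY\rangle.$$
   Context: A Courant algebroid $(E\to M,\rho,\langle\cdot,\cdot\rangle,\circ)$ consists of a real vector bundle $E\to M$ over a smooth manifold, a nondegenerate symmetric fiberwise bilinear pairing $\langle\cdot,\cdot\rangle$ on $E$, a vector bundle map $\rho:E\to TM$ (the anchor), and an $\mathbb R$-bilinear operation $\circ$ on $\Gamma(E)$ (the Dorfman bracket) such that for all $f\in C^\infty(M)$, $x,y,z\in\Gamma(E)$: $x\circ(y\circ z)=(x\circ y)\circ z+y\circ(x\circ z)$; $\rho(x\circ y)=[\rho(x),\rho(y)]$; $x\circ(fy)=(\rho(x)f)y+f(x\circ y)$; $x\circ y+y\circ x=2D\langle x,y\rangle$; $(Df)\circ x=0$; $\rho(x)\langle y,z\rangle=\langle x\circ y,z\rangle+\langle y,x\circ z\rangle$. Here $D:C^\infty(M)\to\Gamma(E)$ is the $\mathbb R$-linear map defined by $\langle Df,x\rangle=\tfrac12\rho(x)f$. The Courant bracket is $[\![x,y]\!]=\tfrac12(x\circ y-y\circ x)$. An almost hypercomplex structure on $E$ is a triple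 $(\mathbf I,\mathbf J,\mathbf K)$ of vector bundle endomorphisms of $E$ over $\mathrm{id}_M$, each orthogonal for $\langle\cdot,\cdot\rangle$, with $\mathbf I^2=\mathbf J^2=\mathbf K^2=\mathbf I\mathbf J\mathbf K=-1$. Given an almost hypercomplex structure, for $f\in C^\infty(M)$ and $X,Y\in\Gamma(E)$ set $\Delta_f(X,Y)=\langle X,Y\rangle Df+\langle\mathbf IX,Y\rangle\mathbf I Df+\langle\mathbf JX,Y\rangle\mathbf JDf+\langle\mathbf KX,Y\rangle\mathbf KDf$. A hypercomplex connection is an $\mathbb R$-bilinear map $\Gamma(E)\times\Gamma(E)\to\Gamma(E)$, $(X,Y)\mapsto\nabla_XY$, with $\nabla_{fX}Y=f\nabla_XY$ and $\nabla_X(fY)=(\rho(X)f)Y+f\nabla_XY-\Delta_f(X,Y)$. Its torsion is $T(X,Y)=\nabla_XY-\nabla_YX-[\![X,Y]\!]$. For an endomorphism $P$ of $E$, $(\nabla_XP)Y:=\nabla_X(PY)-P(\nabla_XY)$, and $\nabla P=0$ means this vanishes for all $X,Y$. *)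

(* Algebraic (section-level) model of a Courant algebroid:
   R plays the role of the reals, A of C^oo(M) (a commutative R-algebra),
   V of Gamma(E) (an A-module). *)
From HB Require Import structures.
From mathcomp Require Import all_boot all_order all_algebra.
Set Implicit Arguments. Unset Strict Implicit. Unset Printing Implicit Defensive.
Import Order.TTheory GRing.Theory Num.Theory.
Local Open Scope ring_scope.

Section Courant.
Variables (R : realFieldType) (A : comAlgType R) (V : lmodType A).

Definition half : A := (2%:R : R)^-1%:A.

(* vector field = R-linear derivation of A *)
Definition is_vector_field (d : A -> A) : Prop :=
  [/\ forall a b, d (a + b) = d a + d b,
      forall (r : R) a, d (r%:A * a) = r%:A * d a
    & forall a b, d (a * b) = d a * b + a * d b].

Definition R_bilinear (op : V -> V -> V) : Prop :=
  [/\ forall x y z, op (x + y) z = op x z + op y z,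
      forall x y z, op x (y + z) = op x y + op x z,
      forall (r : R) x y, op (r%:A *: x) y = r%:A *: op x y
    & forall (r : R) x y, op x (r%:A *: y) = r%:A *: op x y].

Definition courant_bracket (dorf : V -> V -> V) (x y : V) : V :=
  half *: (dorf x y - dorf y x).

Definition courant_algebroid (rho : V -> A -> A) (pair : V -> V -> A)
    (dorf : V -> V -> V) (D : A -> V) : Prop :=
  [/\
      [/\ (forall x y, pair x y = pair y x),
          (forall f x y z, pair (f *: x + y) z = f * pair x z + pair y z) &
          (forall x, (forall y, pair x y = 0) -> x = 0)],
      [/\ (forall f x y g, rho (f *: x + y) g = f * rho x g + rho y g) &
          (forall x, is_vector_field (rho x))],
      R_bilinear dorf,
      (forall f x, pair (D f) x = half * rho x f) &
      [/\ forall x y z, dorf x (dorf y z) = dorf (dorf x y) z + dorf y (dorf x z),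
          forall x y f, rho (dorf x y) f = rho x (rho y f) - rho y (rho x f),
          forall x y f, dorf x (f *: y) = rho x f *: y + f *: dorf x y
        & [/\ forall x y, dorf x y + dorf y x = 2%:R *: D (pair x y),
          forall f x, dorf (D f) x = 0
        & forall x y z, rho x (pair y z) = pair (dorf x y) z + pair y (dorf x z)]]].

Definition bundle_endo (P : V -> V) : Prop :=
  forall f x y, P (f *: x + y) = f *: P x + P y.

Definition almost_hypercomplex (pair : V -> V -> A) (I J K : V -> V) : Prop :=
  [/\ [/\ bundle_endo I, bundle_endo J & bundle_endo K],
      [/\ (forall x y, pair (I x) (I y) = pair x y),
          (forall x y, pair (J x) (J y) = pair x y) &
          (forall x y, pair (K x) (K y) = pair x y)] &
      [/\ forall x, I (I x) = - x, forall x, J (J x) = - x,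
          forall x, K (K x) = - x & forall x, I (J (K x)) = - x]].

Definition Delta (pair : V -> V -> A) (D : A -> V) (I J K : V -> V)
    (f : A) (X Y : V) : V :=
  pair X Y *: D f + pair (I X) Y *: I (D f) + pair (J X) Y *: J (D f)
  + pair (K X) Y *: K (D f).

Definition hypercomplex_connection (rho : V -> A -> A) (pair : V -> V -> A)
    (D : A -> V) (I J K : V -> V) (nabla : V -> V -> V) : Prop :=
  [/\ R_bilinear nabla,
      (forall f X Y, nabla (f *: X) Y = f *: nabla X Y) &
      (forall f X Y, nabla X (f *: Y) =
                     rho X f *: Y + f *: nabla X Y - Delta pair D I J K f X Y)].

Definition torsion (dorf : V -> V -> V) (nabla : V -> V -> V) (X Y : V) : V :=
  nabla X Y - nabla Y X - courant_bracket dorf X Y.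

Definition parallel (nabla : V -> V -> V) (P : V -> V) : Prop :=
  forall X Y, nabla X (P Y) - P (nabla X Y) = 0.

End Courant.

(* Let nabla1, nabla2 be two connections satisfying the hypotheses and let
   S X Y := nabla1 X Y - nabla2 X Y be their difference.
   - Since both connections have the same torsion, S is symmetric.
   - Since I, J, K are parallel for both connections, S commutes with each of
     them in its second argument: S X (P Y) = P (S X Y).
   - For a symmetric S commuting with a complex structure P (P^2 = -1) one
     gets S (P X) (P Y) = - S X Y.
   - In a hypercomplex structure K = I J, so applying the previous identity to
     K, and then to I and J, gives S X Y = - S X Y; as 2 is invertible, S = 0.
   Only the parallelism and torsion hypotheses enter the argument. *)
From Pilot Require Import Defs.
From HB Require Import structures.
From mathcomp Require Import all_boot all_order all_algebra.
Import Order.TTheory GRing.Theory Num.Theory.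
Local Open Scope ring_scope.

Section HypercomplexAlgebra.
Context {R : realFieldType} {A : comAlgType R} {V : lmodType A}.

Lemma bundle_endo_add {P : V -> V} :
  bundle_endo P -> forall x y, P (x + y) = P x + P y.
Proof. by move=> eP x y; rewrite -[x in LHS]scale1r eP scale1r. Qed.

Lemma bundle_endo_opp {P : V -> V} :
  bundle_endo P -> forall x, P (- x) = - P x.
Proof.
move=> eP x.
have P0 : P 0 = 0.
  by apply: (@addrI _ (P 0)); rewrite -bundle_endo_add // !addr0.
by apply: (@addrI _ (P x)); rewrite -bundle_endo_add // !subrr.
Qed.

(* In an almost hypercomplex structure the third endomorphism is I J:
   apply I J K = -1 to K x and use K^2 = -1. *)
Lemma hypercomplex_K {pair : V -> V -> A} {I J K : V -> V} :
  almost_hypercomplex pair I J K -> forall x, K x = I (J x).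
Proof.
case=> [[eI eJ _] _ [_ _ KK IJK]] x.
have := IJK (K x); rewrite KK (bundle_endo_opp eJ) (bundle_endo_opp eI).
by move/oppr_inj.
Qed.

(* The element 1/2 of C^oo(M) inverts 2 (qualified, since ssrnat also
   defines a [half]). *)
Lemma half_mul2 : Defs.half A * 2%:R = 1.
Proof.
rewrite /Defs.half -(rmorph_nat (in_alg A)) -in_algE -rmorphM.
by rewrite mulVf ?pnatr_eq0 // rmorph1.
Qed.

Lemma eq_opp_eq0 (s : V) : s = - s -> s = 0.
Proof.
move=> s_eq.
have s2 : 2%:R *: s = 0 by rewrite scaler_nat mulr2n {2}s_eq subrr.
by rewrite -[s]scale1r -half_mul2 -scalerA s2 scaler0.
Qed.

Lemma symmetric_commuting_anti {S : V -> V -> V} {P : V -> V} :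
  (forall X Y, S X Y = S Y X) ->
  (forall X Y, S X (P Y) = P (S X Y)) ->
  (forall x, P (P x) = - x) ->
  forall X Y, S (P X) (P Y) = - S X Y.
Proof. by move=> Ssym SP PP X Y; rewrite SP Ssym SP PP Ssym. Qed.

(* A symmetric V-valued form commuting with a hypercomplex structure vanishes:
   S(KX,KY) = -S(X,Y) while S(KX,KY) = S(IJX,IJY) = S(X,Y). *)
Lemma symmetric_hypercomplex_form_eq0 {pair : V -> V -> A} {I J K : V -> V}
    {S : V -> V -> V} :
  almost_hypercomplex pair I J K ->
  (forall X Y, S X Y = S Y X) ->
  (forall X Y, S X (I Y) = I (S X Y)) ->
  (forall X Y, S X (J Y) = J (S X Y)) ->
  (forall X Y, S X (K Y) = K (S X Y)) ->
  forall X Y, S X Y = 0.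
Proof.
move=> HH Ssym SI SJ SK X Y; have [_ _ [II JJ KK _]] := HH.
apply: eq_opp_eq0.
rewrite -[RHS](symmetric_commuting_anti Ssym SK KK) !(hypercomplex_K HH).
rewrite (symmetric_commuting_anti Ssym SI II).
by rewrite (symmetric_commuting_anti Ssym SJ JJ) opprK.
Qed.

Section DifferenceTensor.
Variables (dorf : V -> V -> V) (nabla1 nabla2 : V -> V -> V).

Definition difference_tensor (X Y : V) : V := nabla1 X Y - nabla2 X Y.

Lemma difference_tensor_sym :
  (forall X Y, torsion dorf nabla1 X Y = torsion dorf nabla2 X Y) ->
  forall X Y, difference_tensor X Y = difference_tensor Y X.
Proof.
move=> Teq X Y; move: (Teq X Y); rewrite /torsion /difference_tensor => /addIr.
move/(congr1 (fun v => v + nabla1 Y X - nabla2 X Y)).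
rewrite subrK => ->.
by rewrite addrAC [_ - nabla2 Y X]addrC addrK addrC.
Qed.

Lemma difference_tensor_commute {P : V -> V} :
  bundle_endo P -> parallel nabla1 P -> parallel nabla2 P ->
  forall X Y, difference_tensor X (P Y) = P (difference_tensor X Y).
Proof.
move=> eP p1 p2 X Y; rewrite /difference_tensor.
by rewrite (subr0_eq (p1 X Y)) (subr0_eq (p2 X Y)) (bundle_endo_add eP)
  (bundle_endo_opp eP).
Qed.

End DifferenceTensor.

End HypercomplexAlgebra.

Theorem mainTheorem6 (R : realFieldType) (A : comAlgType R) (V : lmodType A)
    (rho : V -> A -> A) (pair : V -> V -> A) (dorf : V -> V -> V) (D : A -> V)
    (I J K : V -> V)
    (HC : courant_algebroid rho pair dorf D)
    (HH : almost_hypercomplex pair I J K) :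
  forall nabla1 nabla2 : V -> V -> V,
    (hypercomplex_connection rho pair D I J K nabla1 /\
     parallel nabla1 I /\ parallel nabla1 J /\ parallel nabla1 K /\
     (forall X Y, torsion dorf nabla1 X Y =
        I (D (pair X (I Y))) + J (D (pair X (J Y))) + K (D (pair X (K Y))))) ->
    (hypercomplex_connection rho pair D I J K nabla2 /\
     parallel nabla2 I /\ parallel nabla2 J /\ parallel nabla2 K /\
     (forall X Y, torsion dorf nabla2 X Y =
        I (D (pair X (I Y))) + J (D (pair X (J Y))) + K (D (pair X (K Y))))) ->
    forall X Y, nabla1 X Y = nabla2 X Y.
Proof.
move=> n1 n2 [_ [pI1 [pJ1 [pK1 T1]]]] [_ [pI2 [pJ2 [pK2 T2]]]] X Y.
have [[eI eJ eK] _ _] := HH.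
have Teq : forall X Y, torsion dorf n1 X Y = torsion dorf n2 X Y.
  by move=> X' Y'; rewrite T1 T2.
apply: subr0_eq.
exact: (symmetric_hypercomplex_form_eq0 HH (difference_tensor_sym dorf n1 n2 Teq)
  (difference_tensor_commute n1 n2 eI pI1 pI2)
  (difference_tensor_commute n1 n2 eJ pJ1 pJ2)
  (difference_tensor_commute n1 n2 eK pK1 pK2)).
Qed.
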